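(* Let $n\ge3$, $\mathcal H=(\mathbb C^2)^{\otimes n}$, with nearest-neighbor neighborhoods $\mathcal N_k=\{k,k+1\}$, $k=1,\dots,n-1$. Let $D=|00\rangle\langle10|+|11\rangle\langle01|$ on $\mathbb C^2\otimes\mathbb C^2$ and $D_k=D$ acting on qubits $k,k+1$ tensored with the identity on the others. Let $\mathcal H'$ be the $+1$-eigenspace of $\sigma_x^{\otimes n}$ (of dimension $2^{n-1}$). Then for every density operator $\rho_0$ supported in $\mathcal H'$, $e^{\mathcal L(0,\{D_k\})t}(\rho_0)\to|\Psi_{\mathrm{GHZ}}\rangle\langle\Psi_{\mathrm{GHZ}}|$ as $t\to\infty$, where $|\Psi_{\mathrm{GHZ}}\rangle=(|0\rangle^{\otimes n}+|1\rangle^{\otimes n})/\sqrt2$; i.e. the GHZ state is $\mathcal H'$-DQLS.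
   Context: $\sigma_x$ is the Pauli $x$ matrix; $\{|0\rangle,|1\rangle\}$ is the computational basis. $\mathcal L(0,\{D_k\})(\rho)=\sum_k(D_k\rho D_k^\dagger-\frac12\{D_k^\dagger D_k,\rho\})$. *)

From Stdlib Require Import Reals Lra Arith ClassicalEpsilon.
Open Scope R_scope.

Record C := mkC { Re : R ; Im : R }.
Definition C0 : C := mkC 0 0.
Definition C1 : C := mkC 1 0.
Definition RtoC (r : R) : C := mkC r 0.
Definition Cadd (x y : C) : C := mkC (Re x + Re y) (Im x + Im y).
Definition Copp (x : C) : C := mkC (- Re x) (- Im x).
Definition Cmul (x y : C) : C :=
  mkC (Re x * Re y - Im x * Im y) (Re x * Im y + Im x * Re y).
Definition Cconj (x : C) : C := mkC (Re x) (- Im x).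
Definition Cmod (x : C) : R := sqrt (Re x ^ 2 + Im x ^ 2).

Fixpoint Csum (N : nat) (f : nat -> C) : C :=
  match N with O => C0 | S m => Cadd (Csum m f) (f m) end.

(** Vectors and matrices: entries indexed by nat; only indices < dimension
    are meaningful. *)
Definition Vec := nat -> C.
Definition Mat := nat -> nat -> C.
Definition Mzero : Mat := fun _ _ => C0.
Definition Mplus (A B : Mat) : Mat := fun i j => Cadd (A i j) (B i j).
Definition Mscale (c : C) (A : Mat) : Mat := fun i j => Cmul c (A i j).
Definition Mmul (N : nat) (A B : Mat) : Mat :=
  fun i j => Csum N (fun k => Cmul (A i k) (B k j)).
Definition Madj (A : Mat) : Mat := fun i j => Cconj (A j i).
Definition Id : Mat := fun i j => if Nat.eqb i j then C1 else C0.

(** Kronecker product A (x) B where B has dimension p. *)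
Definition kron (p : nat) (A B : Mat) : Mat :=
  fun i j => Cmul (A (i / p)%nat (j / p)%nat) (B (i mod p)%nat (j mod p)%nat).

Definition basis (k : nat) : Vec := fun i => if Nat.eqb i k then C1 else C0.
Definition outer (u v : Vec) : Mat := fun i j => Cmul (u i) (Cconj (v j)).

(** Two-qubit basis: |ab> has index 2a+b.
    D = |00><10| + |11><01|  *)
Definition Dop : Mat := Mplus (outer (basis 0) (basis 2)) (outer (basis 3) (basis 1)).

(** D_k : D on qubits k, k+1 (k = 1..n-1, qubit 1 = most significant),
    identity elsewhere: Id_{2^(k-1)} (x) D (x) Id_{2^(n-k-1)} *)
Definition Dk (n k : nat) : Mat := kron (2 ^ (n - k - 1)) (kron 4 Id Dop) Id.

Definition sigmax : Mat := Mplus (outer (basis 0) (basis 1)) (outer (basis 1) (basis 0)).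
Fixpoint Xn (n : nat) : Mat :=
  match n with
  | O => outer (basis 0) (basis 0)
  | S m => kron (2 ^ m) sigmax (Xn m)
  end.

Definition dissip (N : nat) (L rho : Mat) : Mat :=
  Mplus (Mmul N (Mmul N L rho) (Madj L))
        (Mscale (RtoC (- / 2))
           (Mplus (Mmul N (Mmul N (Madj L) L) rho) (Mmul N rho (Mmul N (Madj L) L)))).

Fixpoint Msum1 (K : nat) (f : nat -> Mat) : Mat :=
  match K with O => Mzero | S m => Mplus (Msum1 m f) (f (S m)) end.

(** The Lindbladian L(0,{D_k}) on n qubits (zero Hamiltonian). *)
Definition Lind (n : nat) (rho : Mat) : Mat :=
  Msum1 (n - 1) (fun k => dissip (2 ^ n) (Dk n k) rho).

Fixpoint Lpow (n m : nat) (rho : Mat) : Mat :=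
  match m with O => rho | S m' => Lind n (Lpow n m' rho) end.

Definition Rlim (u : nat -> R) : R := epsilon (inhabits 0) (fun l => Un_cv u l).

(** e^{L t}(rho0) = sum_m t^m/m! L^m(rho0), entrywise. *)
Definition evol (n : nat) (t : R) (rho0 : Mat) : Mat :=
  fun i j =>
    mkC (Rlim (fun M => sum_f_R0 (fun m => t ^ m / INR (fact m) * Re (Lpow n m rho0 i j)) M))
        (Rlim (fun M => sum_f_R0 (fun m => t ^ m / INR (fact m) * Im (Lpow n m rho0 i j)) M)).

Definition is_density (N : nat) (rho : Mat) : Prop :=
  (forall i j, (i < N)%nat -> (j < N)%nat -> rho i j = Cconj (rho j i)) /\
  (forall v : Vec,
     0 <= Re (Csum N (fun i => Csum N (fun j => Cmul (Cconj (v i)) (Cmul (rho i j) (v j)))))) /\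
  Csum N (fun i => rho i i) = C1.

(** rho is supported in the +1 eigenspace of sigma_x^{(x) n}:
    every column of rho (hence its range) is fixed by sigma_x^{(x) n}. *)
Definition supported_in_Hprime (n : nat) (rho : Mat) : Prop :=
  forall i j, (i < 2 ^ n)%nat -> (j < 2 ^ n)%nat -> Mmul (2 ^ n) (Xn n) rho i j = rho i j.

Definition psiGHZ (n : nat) : Vec :=
  fun i => if orb (Nat.eqb i 0) (Nat.eqb i (2 ^ n - 1)) then RtoC (/ sqrt 2) else C0.
Definition GHZ (n : nat) : Mat := outer (psiGHZ n) (psiGHZ n).

(** Write F(t) = e^{L t}(rho0).  Since L has no Hamiltonian part and every
    D_k is a 0/1 matrix with at most one nonzero entry per row, L acts on
    the entries of rho separately on their real and imaginary parts, by a
    real generator [gen]: entry (i,j) receives weight from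
    (flip_k i, flip_k j) whenever neither |i> nor |j> has a "wall"
    (disagreeing neighbours) at k, k+1, and is damped at rate
    (#walls of i + #walls of j) / 2.

    Proof plan.
    1. Compute the entries of D_k, D_k^dag D_k and sigma_x^{(x) n} by bit
       manipulations, and derive the real generator [gen].
    2. Represent F(t) entrywise as the convergent power series [flow]; it
       solves F' = gen F, preserves the trace and commutes with the global
       spin flip.
    3. Entries with a wall in i or j are damped at rate >= 1/2 and fed only
       by entries with strictly larger wall potential [Phi]; by induction on
       the potential every such entry decays like e^{-t/4}
       ([damped_decay], [flow_walled_decays]).
    4. The only wall-free indices are 0...0 and 1...1.  For rho0 supported
       in the +1 eigenspace of sigma_x^{(x) n} the four GHZ entries of F(t)
       coincide, and trace preservation forces them to 1/2
       ([flow_limit]); this is exactly the GHZ projector. *)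

From Stdlib Require Import Reals Lra Lia Arith Bool Classical ClassicalEpsilon.
From Coquelicot Require Import Rcomplements Rbar Hierarchy PSeries Derive AutoDerive.
From Coquelicot Require ElemFct.
Open Scope R_scope.

Lemma Ceq (x y : C) : Re x = Re y -> Im x = Im y -> x = y.
Proof. destruct x, y; simpl; intros -> ->; reflexivity. Qed.

Lemma Cmul_1_l x : Cmul C1 x = x. Proof. apply Ceq; simpl; ring. Qed.
Lemma Cmul_1_r x : Cmul x C1 = x. Proof. apply Ceq; simpl; ring. Qed.
Lemma Cmul_0_l x : Cmul C0 x = C0. Proof. apply Ceq; simpl; ring. Qed.
Lemma Cmul_0_r x : Cmul x C0 = C0. Proof. apply Ceq; simpl; ring. Qed.
Lemma Cadd_0_l x : Cadd C0 x = x. Proof. apply Ceq; simpl; ring. Qed.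
Lemma Cadd_0_r x : Cadd x C0 = x. Proof. apply Ceq; simpl; ring. Qed.

(* The indicator scalar of a boolean; all matrices of the problem have
   0/1 entries and are described through it. *)
Definition ind (b : bool) : C := if b then C1 else C0.

Lemma Cmul_ind_l b x : Cmul (ind b) x = if b then x else C0.
Proof. destruct b; [apply Cmul_1_l | apply Cmul_0_l]. Qed.
Lemma Cmul_ind_r b x : Cmul x (ind b) = if b then x else C0.
Proof. destruct b; [apply Cmul_1_r | apply Cmul_0_r]. Qed.
Lemma Cconj_ind b : Cconj (ind b) = ind b.
Proof. destruct b; apply Ceq; simpl; ring. Qed.
Lemma ind_andb a b : Cmul (ind a) (ind b) = ind (a && b).
Proof. destruct a; simpl; [apply Cmul_1_l | apply Cmul_0_l]. Qed.

Lemma Csum_zero N f : (forall i, (i < N)%nat -> f i = C0) -> Csum N f = C0.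
Proof.
  induction N as [|N IH]; intros H; simpl; auto.
  rewrite IH, H by first [lia | intros; apply H; lia]. apply Cadd_0_l.
Qed.

(* A sum with a single nonzero term; this evaluates every matrix product
   below, since each row of D_k and of sigma_x^{(x) n} has at most one
   nonzero entry. *)
Lemma Csum_single N f p : (p < N)%nat ->
  (forall i, (i < N)%nat -> i <> p -> f i = C0) -> Csum N f = f p.
Proof.
  induction N as [|N IH]; intros Hp H; [lia|]. simpl.
  destruct (Nat.eq_dec p N) as [->|Hne].
  - rewrite Csum_zero by (intros; apply H; lia). apply Cadd_0_l.
  - rewrite IH, (H N) by first [lia | intros; apply H; lia]. apply Cadd_0_r.
Qed.

Fixpoint rsum (N : nat) (f : nat -> R) : R :=
  match N with O => 0 | S m => rsum m f + f m end.

Lemma rsum_ext N f g : (forall i, (i < N)%nat -> f i = g i) -> rsum N f = rsum N g.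
Proof.
  induction N as [|N IH]; intros H; simpl; auto.
  rewrite IH, H by first [lia | intros; apply H; lia]. reflexivity.
Qed.

Lemma rsum_zero N f : (forall i, (i < N)%nat -> f i = 0) -> rsum N f = 0.
Proof.
  induction N as [|N IH]; intros H; simpl; auto.
  rewrite IH, H by first [lia | intros; apply H; lia]. ring.
Qed.

Lemma rsum_single N f p : (p < N)%nat ->
  (forall i, (i < N)%nat -> i <> p -> f i = 0) -> rsum N f = f p.
Proof.
  induction N as [|N IH]; intros Hp H; [lia|]. simpl.
  destruct (Nat.eq_dec p N) as [->|Hne].
  - rewrite rsum_zero by (intros; apply H; lia). ring.
  - rewrite IH, (H N) by first [lia | intros; apply H; lia]. ring.
Qed.

Lemma rsum_plus N f g : rsum N (fun i => f i + g i) = rsum N f + rsum N g.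
Proof. induction N as [|N IH]; simpl; [ring | rewrite IH; ring]. Qed.
Lemma rsum_minus N f g : rsum N (fun i => f i - g i) = rsum N f - rsum N g.
Proof. induction N as [|N IH]; simpl; [ring | rewrite IH; ring]. Qed.
Lemma rsum_scal N c f : rsum N (fun i => c * f i) = c * rsum N f.
Proof. induction N as [|N IH]; simpl; [ring | rewrite IH; ring]. Qed.
Lemma rsum_const N c : rsum N (fun _ => c) = INR N * c.
Proof. induction N as [|N IH]; simpl rsum; [simpl; ring | rewrite IH, S_INR; ring]. Qed.

Lemma rsum_swap N M (f : nat -> nat -> R) :
  rsum N (fun i => rsum M (fun j => f i j)) = rsum M (fun j => rsum N (fun i => f i j)).
Proof.
  induction N as [|N IH]; simpl.
  - symmetry; apply rsum_zero; auto.
  - rewrite IH, <- rsum_plus. reflexivity.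
Qed.

Lemma rsum_le N f g : (forall i, (i < N)%nat -> f i <= g i) -> rsum N f <= rsum N g.
Proof.
  induction N as [|N IH]; intros H; simpl; [lra|].
  apply Rplus_le_compat; [apply IH; intros; apply H | apply H]; lia.
Qed.

Lemma rsum_abs N f : Rabs (rsum N f) <= rsum N (fun i => Rabs (f i)).
Proof.
  induction N as [|N IH]; simpl; [rewrite Rabs_R0; lra|].
  eapply Rle_trans; [apply Rabs_triang | lra].
Qed.

Lemma rsum_nonneg N f : (forall i, (i < N)%nat -> 0 <= f i) -> 0 <= rsum N f.
Proof. intros H. rewrite <- (rsum_zero N (fun _ => 0)) by auto. apply rsum_le; auto. Qed.

Lemma rsum_term_le N f p : (p < N)%nat ->
  (forall i, (i < N)%nat -> 0 <= f i) -> f p <= rsum N f.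
Proof.
  induction N as [|N IH]; intros Hp H; [lia|]. simpl.
  assert (0 <= rsum N f) by (apply rsum_nonneg; intros; apply H; lia).
  destruct (Nat.eq_dec p N) as [->|Hne]; [lra|].
  pose proof (IH ltac:(lia) ltac:(intros; apply H; lia)). pose proof (H N ltac:(lia)). lra.
Qed.

(** The basis index of |q_1 ... q_n> is sum_k q_k 2^(n-k), so qubit k is
    bit n-k.  Three index maps govern the dynamics: [wall n k i] says that
    qubits k and k+1 of |i> disagree, [flip n k i] flips qubit k and
    [cmpl n i] flips all qubits (the action of sigma_x^{(x) n}). *)

Definition wall (n k i : nat) : bool :=
  xorb (Nat.testbit i (n - k)) (Nat.testbit i (n - k - 1)).
Definition flip (n k i : nat) : nat := Nat.lxor i (2 ^ (n - k)).
Definition cmpl (n i : nat) : nat := (2 ^ n - 1 - i)%nat.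

Lemma pow2_pos n : (0 < 2 ^ n)%nat.
Proof. apply Nat.neq_0_lt_0, Nat.pow_nonzero; lia. Qed.

Lemma testbit_high n i : (i < 2 ^ n)%nat -> forall p, (n <= p)%nat -> Nat.testbit i p = false.
Proof.
  intros Hi p Hp. rewrite <- (Nat.mod_small i (2 ^ n)) by auto.
  apply Nat.mod_pow2_bits_high; auto.
Qed.

Lemma lt_pow2_of_testbit n i :
  (forall p, (n <= p)%nat -> Nat.testbit i p = false) -> (i < 2 ^ n)%nat.
Proof.
  intros H. replace i with (i mod 2 ^ n).
  - apply Nat.mod_upper_bound. pose proof (pow2_pos n); lia.
  - apply Nat.bits_inj_iff. intros p. destruct (Nat.lt_ge_cases p n).
    + apply Nat.mod_pow2_bits_low; auto.
    + rewrite Nat.mod_pow2_bits_high; auto. symmetry; auto.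
Qed.

Lemma testbit_flip n k i p :
  Nat.testbit (flip n k i) p = xorb (Nat.testbit i p) (n - k =? p)%nat.
Proof. unfold flip. rewrite Nat.lxor_spec, Nat.pow2_bits_eqb. reflexivity. Qed.

Lemma flip_lt n k i : (1 <= k)%nat -> (k < n)%nat -> (i < 2 ^ n)%nat ->
  (flip n k i < 2 ^ n)%nat.
Proof.
  intros Hk Hkn Hi. apply lt_pow2_of_testbit. intros p Hp.
  rewrite testbit_flip, (testbit_high n i Hi p Hp).
  replace (n - k =? p)%nat with false by (symmetry; apply Nat.eqb_neq; lia). reflexivity.
Qed.

Lemma flip_involutive n k i : flip n k (flip n k i) = i.
Proof. unfold flip. rewrite Nat.lxor_assoc, Nat.lxor_nilpotent, Nat.lxor_0_r. reflexivity. Qed.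

Lemma wall_flip n k i : (k < n)%nat -> wall n k (flip n k i) = negb (wall n k i).
Proof.
  intros Hk. unfold wall. rewrite !testbit_flip, Nat.eqb_refl.
  replace (n - k =? n - k - 1)%nat with false by (symmetry; apply Nat.eqb_neq; lia).
  destruct (Nat.testbit i (n - k)), (Nat.testbit i (n - k - 1)); reflexivity.
Qed.

Lemma wall_flip_other n k q i : (q < n)%nat -> q <> k -> q <> (k - 1)%nat -> (1 <= k)%nat ->
  (k < n)%nat -> wall n q (flip n k i) = wall n q i.
Proof.
  intros. unfold wall. rewrite !testbit_flip.
  replace (n - k =? n - q)%nat with false by (symmetry; apply Nat.eqb_neq; lia).
  replace (n - k =? n - q - 1)%nat with false by (symmetry; apply Nat.eqb_neq; lia).
  rewrite !xorb_false_r. reflexivity.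
Qed.

Lemma cmpl_lt n i : (cmpl n i < 2 ^ n)%nat.
Proof. unfold cmpl. pose proof (pow2_pos n). lia. Qed.

Lemma ones_pow2 n : Nat.ones n = (2 ^ n - 1)%nat.
Proof. rewrite Nat.ones_equiv, <- Nat.sub_1_r. reflexivity. Qed.

Lemma testbit_cmpl n i p : (i < 2 ^ n)%nat -> (p < n)%nat ->
  Nat.testbit (cmpl n i) p = negb (Nat.testbit i p).
Proof.
  intros Hi Hp. replace (cmpl n i) with (Nat.lnot i n).
  - apply Nat.lnot_spec_low; auto.
  - unfold cmpl. rewrite Nat.lnot_sub_low, ones_pow2; [lia|].
    destruct (Nat.eq_dec i 0) as [->|Hi0]; [change (Nat.log2 0) with 0%nat; lia|].
    apply Nat.log2_lt_pow2; lia.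
Qed.

Lemma wall_cmpl n k i : (1 <= k)%nat -> (k < n)%nat -> (i < 2 ^ n)%nat ->
  wall n k (cmpl n i) = wall n k i.
Proof.
  intros. unfold wall. rewrite !testbit_cmpl by (auto; lia).
  destruct (Nat.testbit i (n - k)), (Nat.testbit i (n - k - 1)); reflexivity.
Qed.

Lemma flip_cmpl n k i : (1 <= k)%nat -> (k < n)%nat -> (i < 2 ^ n)%nat ->
  flip n k (cmpl n i) = cmpl n (flip n k i).
Proof.
  intros Hk Hkn Hi. apply Nat.bits_inj_iff. intros p.
  destruct (Nat.lt_ge_cases p n).
  - rewrite testbit_flip, !testbit_cmpl, testbit_flip by (auto using flip_lt).
    destruct (Nat.testbit i p), (n - k =? p)%nat; reflexivity.
  - rewrite !(testbit_high n) by (auto using flip_lt, cmpl_lt). reflexivity.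
Qed.

Lemma exists_wall n i : (i < 2 ^ n)%nat -> i <> 0%nat -> i <> (2 ^ n - 1)%nat ->
  exists k, (1 <= k)%nat /\ (k < n)%nat /\ wall n k i = true.
Proof.
  intros Hi H0 H1. apply NNPP. intros Hno.
  assert (Hconst : forall p, (p < n)%nat -> Nat.testbit i p = Nat.testbit i 0).
  { induction p as [|p IH]; intros Hp; auto.
    rewrite <- IH by lia.
    destruct (wall n (n - S p) i) eqn:Hw.
    - exfalso. apply Hno. exists (n - S p)%nat. repeat split; auto; lia.
    - unfold wall in Hw. replace (n - (n - S p))%nat with (S p) in Hw by lia.
      replace (S p - 1)%nat with p in Hw by lia.
      destruct (Nat.testbit i (S p)), (Nat.testbit i p); easy. }
  destruct (Nat.testbit i 0) eqn:Hb0; [apply H1 | apply H0];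
    apply Nat.bits_inj_iff; intros p; destruct (Nat.lt_ge_cases p n);
    rewrite ?Hconst, ?Hb0 by auto.
  - rewrite <- ones_pow2, Nat.ones_spec_low; auto.
  - rewrite <- ones_pow2, Nat.ones_spec_high, testbit_high with (n := n); auto.
  - rewrite Nat.bits_0. reflexivity.
  - rewrite Nat.bits_0, testbit_high with (n := n); auto.
Qed.

Lemma div_pow2_eq_iff x y q : (x / 2 ^ q = y / 2 ^ q)%nat <->
  (forall p, (q <= p)%nat -> Nat.testbit x p = Nat.testbit y p).
Proof.
  rewrite <- Nat.bits_inj_iff. split.
  - intros H p Hp. specialize (H (p - q)%nat). rewrite !Nat.div_pow2_bits in H.
    replace (p - q + q)%nat with p in H by lia. exact H.
  - intros H p. rewrite !Nat.div_pow2_bits. apply H; lia.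
Qed.

Lemma mod_pow2_eq_iff x y q : (x mod 2 ^ q = y mod 2 ^ q)%nat <->
  (forall p, (p < q)%nat -> Nat.testbit x p = Nat.testbit y p).
Proof.
  rewrite <- Nat.bits_inj_iff. split.
  - intros H p Hp. specialize (H p). rewrite !Nat.mod_pow2_bits_low in H; auto.
  - intros H p. destruct (Nat.lt_ge_cases p q).
    + rewrite !Nat.mod_pow2_bits_low; auto.
    + rewrite !Nat.mod_pow2_bits_high; auto.
Qed.

Lemma two_bit_digit x m : ((x / 2 ^ m) mod 4 =
  2 * Nat.b2n (Nat.testbit x (S m)) + Nat.b2n (Nat.testbit x m))%nat.
Proof.
  rewrite !Nat.testbit_spec'.
  replace (2 ^ S m)%nat with (2 ^ m * 2)%nat by (rewrite Nat.pow_succ_r'; lia).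
  rewrite <- Nat.Div0.div_div. change 4%nat with (2 * 2)%nat.
  rewrite Nat.Div0.mod_mul_r. lia.
Qed.

Lemma Dop_entry x1 x0 y1 y0 :
  Dop (2 * Nat.b2n x1 + Nat.b2n x0)%nat (2 * Nat.b2n y1 + Nat.b2n y0)%nat =
  ind (negb (xorb x1 x0) && Bool.eqb y1 (negb x1) && Bool.eqb y0 x0).
Proof. destruct x1, x0, y1, y0; apply Ceq; cbn; ring. Qed.

Lemma flip_bit_blocks (f g : nat -> bool) m :
  (forall p, g p = xorb (f p) (S m =? p)%nat) <->
  (forall p, (S (S m) <= p)%nat -> f p = g p) /\ g (S m) = negb (f (S m)) /\
  g m = f m /\ (forall p, (p < m)%nat -> f p = g p).
Proof.
  split.
  - intros H. rewrite !H, Nat.eqb_refl, xorb_true_r.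
    replace (S m =? m)%nat with false by (symmetry; apply Nat.eqb_neq; lia).
    repeat split; auto using xorb_false_r; intros p Hp; rewrite H;
      replace (S m =? p)%nat with false by (symmetry; apply Nat.eqb_neq; lia);
      symmetry; apply xorb_false_r.
  - intros (Hhi & Hm1 & Hm & Hlo) p.
    destruct (Nat.eq_dec p (S m)) as [->|Hne].
    + rewrite Nat.eqb_refl, xorb_true_r. exact Hm1.
    + replace (S m =? p)%nat with false by (symmetry; apply Nat.eqb_neq; lia).
      rewrite xorb_false_r. destruct (Nat.lt_total p m) as [Hp|[->|Hp]];
        [symmetry; apply Hlo | exact Hm | symmetry; apply Hhi]; lia.
Qed.

Lemma Dk_entry n k i a : (1 <= k)%nat -> (k < n)%nat ->
  Dk n k i a = ind (negb (wall n k i) && (a =? flip n k i))%nat.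
Proof.
  intros Hk Hkn. set (m := (n - k - 1)%nat).
  assert (Hm : (n - k = S m)%nat) by (unfold m; lia).
  unfold Dk, kron. fold m. rewrite !two_bit_digit, Dop_entry.
  change (Id ?x ?y) with (ind (x =? y)%nat). rewrite !ind_andb. f_equal.
  rewrite !Nat.Div0.div_div.
  replace (2 ^ m * 4)%nat with (2 ^ S (S m))%nat by (simpl; lia).
  unfold wall. rewrite Hm. replace (S m - 1)%nat with m by lia.
  apply eq_true_iff_eq.
  rewrite !andb_true_iff, !Nat.eqb_eq, !eqb_true_iff, div_pow2_eq_iff, mod_pow2_eq_iff.
  rewrite <- Nat.bits_inj_iff. unfold Nat.eqf.
  setoid_rewrite testbit_flip. rewrite Hm, flip_bit_blocks.
  destruct (Nat.testbit i (S m)), (Nat.testbit i m); simpl; intuition congruence.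
Qed.

Lemma sigmax_entry x y :
  sigmax x y = ind (((x =? 0) && (y =? 1)) || ((x =? 1) && (y =? 0)))%nat.
Proof.
  unfold sigmax, Mplus, outer, basis.
  destruct x as [|[|x]], y as [|[|y]]; apply Ceq; cbn; ring.
Qed.

Lemma Xn_entry n i j : (i < 2 ^ n)%nat -> (j < 2 ^ n)%nat ->
  Xn n i j = ind (j =? cmpl n i)%nat.
Proof.
  revert i j. induction n as [|n IH]; intros i j Hi Hj.
  - simpl in Hi, Hj. replace i with 0%nat by lia. replace j with 0%nat by lia.
    apply Ceq; cbn; ring.
  - simpl Xn. unfold kron. set (P := (2 ^ n)%nat).
    assert (HP : (0 < P)%nat) by apply pow2_pos.
    rewrite IH, sigmax_entry, ind_andb by (apply Nat.mod_upper_bound; lia). f_equal.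
    unfold cmpl. replace (2 ^ S n)%nat with (2 * P)%nat in * by (simpl; lia).
    pose proof (Nat.div_mod_eq i P). pose proof (Nat.div_mod_eq j P).
    pose proof (Nat.mod_upper_bound i P ltac:(lia)).
    pose proof (Nat.mod_upper_bound j P ltac:(lia)).
    assert (i / P < 2)%nat by (apply Nat.Div0.div_lt_upper_bound; lia).
    assert (j / P < 2)%nat by (apply Nat.Div0.div_lt_upper_bound; lia).
    apply eq_true_iff_eq.
    rewrite andb_true_iff, orb_true_iff, !andb_true_iff, !Nat.eqb_eq.
    destruct (i / P)%nat as [|[|]], (j / P)%nat as [|[|]]; lia.
Qed.

Lemma Xn_mul n rho i j : (i < 2 ^ n)%nat -> (j < 2 ^ n)%nat ->
  Mmul (2 ^ n) (Xn n) rho i j = rho (cmpl n i) j.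
Proof.
  intros Hi Hj. unfold Mmul.
  rewrite (Csum_single _ _ (cmpl n i)); auto using cmpl_lt.
  - rewrite Xn_entry, Nat.eqb_refl by auto using cmpl_lt. apply Cmul_1_l.
  - intros c Hc Hne. rewrite Xn_entry, Cmul_ind_l by auto.
    replace (c =? cmpl n i)%nat with false by (symmetry; apply Nat.eqb_neq; auto).
    reflexivity.
Qed.

(** The real and imaginary parts of the entries evolve under the same real
    linear generator, so the analysis is carried out for an arbitrary
    real-linear map [proj : C -> R] and applied to [Re] and [Im]. *)

Definition Rlinear (proj : C -> R) : Prop :=
  (forall x y, proj (Cadd x y) = proj x + proj y) /\
  (forall c x, proj (Cmul (RtoC c) x) = c * proj x).

Lemma Rlinear_Re : Rlinear Re.
Proof. split; intros; simpl; ring. Qed.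
Lemma Rlinear_Im : Rlinear Im.
Proof. split; intros; simpl; ring. Qed.

Section RealLinear.
Variable proj : C -> R.
Hypothesis Hproj : Rlinear proj.

Lemma proj_add x y : proj (Cadd x y) = proj x + proj y.
Proof. apply Hproj. Qed.
Lemma proj_scale c x : proj (Cmul (RtoC c) x) = c * proj x.
Proof. apply Hproj. Qed.
Lemma proj_C0 : proj C0 = 0.
Proof.
  replace C0 with (Cmul (RtoC 0) C0) by (apply Ceq; simpl; ring).
  rewrite proj_scale. ring.
Qed.
Lemma proj_Csum N f : proj (Csum N f) = rsum N (fun i => proj (f i)).
Proof. induction N as [|N IH]; simpl; [apply proj_C0 | rewrite proj_add, IH; reflexivity]. Qed.

End RealLinear.

Definition bR (b : bool) : R := if b then 1 else 0.

Section Dissipator.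
Variables n k : nat.
Hypothesis Hk : (1 <= k)%nat.
Hypothesis Hkn : (k < n)%nat.
Let N := (2 ^ n)%nat.

Lemma Dk_mul_l rho i b : (i < N)%nat ->
  Mmul N (Dk n k) rho i b = if negb (wall n k i) then rho (flip n k i) b else C0.
Proof.
  intros Hi. unfold Mmul. destruct (negb (wall n k i)) eqn:E.
  - rewrite (Csum_single _ _ (flip n k i)) by (try apply flip_lt; auto; intros c Hc Hne;
      rewrite Dk_entry, E, Cmul_ind_l by auto; simpl;
      replace (c =? flip n k i)%nat with false by (symmetry; apply Nat.eqb_neq; auto);
      reflexivity).
    rewrite Dk_entry, E, Nat.eqb_refl by auto. apply Cmul_1_l.
  - apply Csum_zero. intros c Hc. rewrite Dk_entry, E by auto. apply Cmul_0_l.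
Qed.

Lemma Dk_sandwich rho i j : (i < N)%nat -> (j < N)%nat ->
  Mmul N (Mmul N (Dk n k) rho) (Madj (Dk n k)) i j =
  if negb (wall n k i) && negb (wall n k j) then rho (flip n k i) (flip n k j) else C0.
Proof.
  intros Hi Hj. unfold Mmul at 1. unfold Madj.
  destruct (negb (wall n k j)) eqn:E.
  - rewrite (Csum_single _ _ (flip n k j)) by (try apply flip_lt; auto; intros c Hc Hne;
      rewrite (Dk_entry n k j), E, Cconj_ind, Cmul_ind_r by auto; simpl;
      replace (c =? flip n k j)%nat with false by (symmetry; apply Nat.eqb_neq; auto);
      reflexivity).
    rewrite (Dk_entry n k j), E, Nat.eqb_refl, Cconj_ind, Cmul_ind_r, Dk_mul_l by auto.
    rewrite !andb_true_r. reflexivity.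
  - rewrite andb_false_r. apply Csum_zero. intros c Hc.
    rewrite (Dk_entry n k j), E, Cconj_ind, Cmul_ind_r by auto. reflexivity.
Qed.

Lemma DkDk_entry i a : (i < N)%nat ->
  Mmul N (Madj (Dk n k)) (Dk n k) i a = ind (wall n k i && (a =? i))%nat.
Proof.
  intros Hi. unfold Mmul, Madj.
  rewrite (Csum_single _ _ (flip n k i)) by (try apply flip_lt; auto; intros c Hc Hne;
      rewrite (Dk_entry n k c i) by auto;
      replace (i =? flip n k c)%nat with false by (symmetry; apply Nat.eqb_neq; intros ->;
        apply Hne; symmetry; apply flip_involutive);
      rewrite andb_false_r, Cconj_ind; apply Cmul_0_l).
  rewrite !Dk_entry, flip_involutive, Nat.eqb_refl, wall_flip by auto.
  rewrite negb_involutive, andb_true_r, Cconj_ind, ind_andb.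
  destruct (wall n k i); reflexivity.
Qed.

Lemma DkDk_mul_l rho i j : (i < N)%nat ->
  Mmul N (Mmul N (Madj (Dk n k)) (Dk n k)) rho i j = if wall n k i then rho i j else C0.
Proof.
  intros Hi. unfold Mmul at 1.
  rewrite (Csum_single _ _ i) by (auto; intros c Hc Hne; rewrite DkDk_entry by auto;
    replace (c =? i)%nat with false by (symmetry; apply Nat.eqb_neq; auto);
    rewrite andb_false_r; apply Cmul_0_l).
  rewrite DkDk_entry, Nat.eqb_refl, andb_true_r, Cmul_ind_l by auto. reflexivity.
Qed.

Lemma DkDk_mul_r rho i j : (j < N)%nat ->
  Mmul N rho (Mmul N (Madj (Dk n k)) (Dk n k)) i j = if wall n k j then rho i j else C0.
Proof.
  intros Hj. unfold Mmul at 1.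
  rewrite (Csum_single _ _ j) by (auto; intros c Hc Hne; rewrite DkDk_entry by auto;
    replace (j =? c)%nat with false by (symmetry; apply Nat.eqb_neq; auto);
    rewrite andb_false_r; apply Cmul_0_r).
  rewrite DkDk_entry, Nat.eqb_refl, andb_true_r, Cmul_ind_r by auto. reflexivity.
Qed.

Lemma dissip_entry proj rho i j : Rlinear proj -> (i < N)%nat -> (j < N)%nat ->
  proj (dissip N (Dk n k) rho i j) =
  (if negb (wall n k i) && negb (wall n k j) then proj (rho (flip n k i) (flip n k j)) else 0)
  - / 2 * (bR (wall n k i) + bR (wall n k j)) * proj (rho i j).
Proof.
  intros Hproj Hi Hj. unfold dissip, Mplus, Mscale.
  rewrite Dk_sandwich, DkDk_mul_l, DkDk_mul_r by auto.
  rewrite !proj_add, proj_scale, proj_add by auto.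
  destruct (negb (wall n k i) && negb (wall n k j)), (wall n k i), (wall n k j);
    unfold bR; rewrite ?proj_C0 by auto; ring.
Qed.

End Dissipator.

(** [gen n r] is the action of L(0,{D_k}) on the array r of (real or
    imaginary parts of) matrix entries; qubit pairs are indexed by
    k = S q, q < n-1. *)

Definition gen (n : nat) (r : nat -> nat -> R) (i j : nat) : R :=
  rsum (n - 1) (fun q =>
    (if negb (wall n (S q) i) && negb (wall n (S q) j)
     then r (flip n (S q) i) (flip n (S q) j) else 0)
    - / 2 * (bR (wall n (S q) i) + bR (wall n (S q) j)) * r i j).

Fixpoint genpow (n m : nat) (r : nat -> nat -> R) : nat -> nat -> R :=
  match m with O => r | S m' => gen n (genpow n m' r) end.

Lemma gen_ext n r r' i j : (i < 2 ^ n)%nat -> (j < 2 ^ n)%nat ->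
  (forall a b, (a < 2 ^ n)%nat -> (b < 2 ^ n)%nat -> r a b = r' a b) ->
  gen n r i j = gen n r' i j.
Proof.
  intros Hi Hj H. unfold gen. apply rsum_ext. intros q Hq.
  rewrite !H by (auto; apply flip_lt; lia). reflexivity.
Qed.

Lemma proj_Lind proj n rho i j : Rlinear proj -> (i < 2 ^ n)%nat -> (j < 2 ^ n)%nat ->
  proj (Lind n rho i j) = gen n (fun a b => proj (rho a b)) i j.
Proof.
  intros Hproj Hi Hj. unfold Lind, gen.
  transitivity (rsum (n - 1) (fun q => proj (dissip (2 ^ n) (Dk n (S q)) rho i j))).
  - generalize (n - 1)%nat. intros K. induction K as [|K IH]; simpl.
    + apply proj_C0; auto.
    + unfold Mplus. rewrite proj_add, IH by auto. reflexivity.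
  - apply rsum_ext. intros q Hq. apply dissip_entry; auto; lia.
Qed.

Lemma proj_Lpow proj n m rho i j : Rlinear proj -> (i < 2 ^ n)%nat -> (j < 2 ^ n)%nat ->
  proj (Lpow n m rho i j) = genpow n m (fun a b => proj (rho a b)) i j.
Proof.
  intros Hproj. revert i j. induction m as [|m IH]; intros i j Hi Hj; simpl; auto.
  rewrite proj_Lind by auto. apply gen_ext; auto.
Qed.

Lemma gen_bound n r M i j : 0 <= M -> (i < 2 ^ n)%nat -> (j < 2 ^ n)%nat ->
  (forall a b, (a < 2 ^ n)%nat -> (b < 2 ^ n)%nat -> Rabs (r a b) <= M) ->
  Rabs (gen n r i j) <= 2 * INR n * M.
Proof.
  intros HM Hi Hj H. unfold gen. eapply Rle_trans; [apply rsum_abs|].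
  apply Rle_trans with (rsum (n - 1) (fun _ => 2 * M)).
  - apply rsum_le. intros q Hq.
    assert (Hgain : Rabs (if negb (wall n (S q) i) && negb (wall n (S q) j)
                          then r (flip n (S q) i) (flip n (S q) j) else 0) <= M).
    { destruct (_ && _); [apply H; apply flip_lt | rewrite Rabs_R0]; auto; lia. }
    assert (Hrate : Rabs (/ 2 * (bR (wall n (S q) i) + bR (wall n (S q) j))) <= 1).
    { destruct (wall n (S q) i), (wall n (S q) j); unfold bR; apply Rabs_le; lra. }
    pose proof (H i j Hi Hj). pose proof (Rabs_pos (r i j)).
    unfold Rminus. eapply Rle_trans; [apply Rabs_triang|].
    rewrite Rabs_Ropp, Rabs_mult.
    pose proof (Rabs_pos (/ 2 * (bR (wall n (S q) i) + bR (wall n (S q) j)))).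
    nra.
  - rewrite rsum_const. assert (INR (n - 1) <= INR n) by (apply le_INR; lia). nra.
Qed.

Lemma rsum_involution N (s : nat -> nat) f :
  (forall i, (i < N)%nat -> (s i < N)%nat) -> (forall i, (i < N)%nat -> s (s i) = i) ->
  rsum N (fun i => f (s i)) = rsum N f.
Proof.
  intros Hlt Hinv.
  transitivity (rsum N (fun i => rsum N (fun c => if (c =? s i)%nat then f c else 0))).
  - apply rsum_ext. intros i Hi. rewrite (rsum_single _ _ (s i)), Nat.eqb_refl; auto.
    intros c Hc Hne. replace (c =? s i)%nat with false by (symmetry; apply Nat.eqb_neq; auto).
    reflexivity.
  - rewrite rsum_swap. apply rsum_ext. intros c Hc.
    rewrite (rsum_single _ _ (s c)), Hinv, Nat.eqb_refl; auto.
    intros i Hi Hne. replace (c =? s i)%nat with false; [reflexivity|].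
    symmetry; apply Nat.eqb_neq. intros ->. apply Hne. symmetry; auto.
Qed.

(* Trace preservation: the weight moved onto the diagonal by D_k equals the
   weight damped on the diagonal. *)
Lemma gen_trace n r : rsum (2 ^ n) (fun i => gen n r i i) = 0.
Proof.
  unfold gen. rewrite rsum_swap. apply rsum_zero. intros q Hq.
  set (w := wall n (S q)). set (f := flip n (S q)).
  transitivity (rsum (2 ^ n) (fun i => (if w (f i) then r (f i) (f i) else 0))
                - rsum (2 ^ n) (fun i => if w i then r i i else 0)).
  - rewrite <- rsum_minus. apply rsum_ext. intros i Hi.
    unfold w, f. rewrite wall_flip by lia.
    destruct (wall n (S q) i); simpl; unfold bR; field.
  - rewrite (rsum_involution _ f (fun i => if w i then r i i else 0)); [ring| |];
      intros; unfold f; auto using flip_involutive; apply flip_lt; lia.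
Qed.

Lemma gen_cmpl_l n r i j : (i < 2 ^ n)%nat -> (j < 2 ^ n)%nat ->
  (forall a b, (a < 2 ^ n)%nat -> (b < 2 ^ n)%nat -> r (cmpl n a) b = r a b) ->
  gen n r (cmpl n i) j = gen n r i j.
Proof.
  intros Hi Hj H. unfold gen. apply rsum_ext. intros q Hq.
  rewrite wall_cmpl, flip_cmpl, !H by (auto; try apply flip_lt; lia). reflexivity.
Qed.

Lemma gen_cmpl_r n r i j : (i < 2 ^ n)%nat -> (j < 2 ^ n)%nat ->
  (forall a b, (a < 2 ^ n)%nat -> (b < 2 ^ n)%nat -> r a (cmpl n b) = r a b) ->
  gen n r i (cmpl n j) = gen n r i j.
Proof.
  intros Hi Hj H. unfold gen. apply rsum_ext. intros q Hq.
  rewrite (wall_cmpl n (S q) j), (flip_cmpl n (S q) j), !H by (auto; try apply flip_lt; lia).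
  reflexivity.
Qed.

Definition gain (n : nat) (r : nat -> nat -> R) (i j : nat) : R :=
  rsum (n - 1) (fun q =>
    if negb (wall n (S q) i) && negb (wall n (S q) j)
    then r (flip n (S q) i) (flip n (S q) j) else 0).
Definition rate (n i j : nat) : R :=
  / 2 * rsum (n - 1) (fun q => bR (wall n (S q) i) + bR (wall n (S q) j)).

Lemma gen_gain_rate n r i j : gen n r i j = gain n r i j - rate n i j * r i j.
Proof.
  unfold gen, gain, rate. rewrite rsum_minus, Rmult_assoc, (Rmult_comm _ (r i j)).
  rewrite <- !rsum_scal. f_equal. apply rsum_ext; intros; ring.
Qed.

Lemma rate_ge_half n i j k : (1 <= k)%nat -> (k < n)%nat ->
  wall n k i = true \/ wall n k j = true -> / 2 <= rate n i j.
Proof.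
  intros Hk Hkn Hw. unfold rate.
  assert (Hpos : forall q, 0 <= bR (wall n (S q) i) + bR (wall n (S q) j))
    by (intros; destruct (wall n (S q) i), (wall n (S q) j); unfold bR; lra).
  assert (1 <= rsum (n - 1) (fun q => bR (wall n (S q) i) + bR (wall n (S q) j))).
  { eapply Rle_trans; [| apply (rsum_term_le _ _ (k - 1)); auto; lia].
    cbv beta. replace (S (k - 1)) with k by lia.
    destruct Hw as [E|E]; rewrite E; destruct (wall n k i), (wall n k j); unfold bR; lra. }
  lra.
Qed.

(** The inflow into
    (i,j) comes from (flip_k i, flip_k j) with no wall at k in i, j; flipping
    qubit k creates the wall k and changes only the wall k-1 otherwise, so
    Phi strictly increases.  This is what makes the decay argument
    well-founded. *)

Fixpoint nsum (m : nat) (f : nat -> nat) : nat :=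
  match m with O => O | S p => (nsum p f + f p)%nat end.

Lemma nsum_le m f g : (forall i, (i < m)%nat -> (f i <= g i)%nat) -> (nsum m f <= nsum m g)%nat.
Proof.
  induction m as [|m IH]; intros H; simpl; auto.
  pose proof (H m ltac:(lia)). pose proof (IH ltac:(intros; apply H; lia)). lia.
Qed.

Lemma nsum_plus m f g : nsum m (fun i => f i + g i)%nat = (nsum m f + nsum m g)%nat.
Proof. induction m as [|m IH]; simpl; auto. rewrite IH; lia. Qed.

Lemma nsum_const m c : nsum m (fun _ => c) = (m * c)%nat.
Proof. induction m as [|m IH]; simpl; auto. rewrite IH; lia. Qed.

Lemma nsum_point m c : nsum m (fun q => if (S q =? c)%nat then c else O) =
  (if (1 <=? c) && (c <=? m) then c else O)%nat.
Proof.
  induction m as [|m IH]; [destruct c; reflexivity|].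
  cbn [nsum]. rewrite IH.
  destruct (Nat.eqb_spec (S m) c), (Nat.leb_spec 1 c), (Nat.leb_spec c m),
    (Nat.leb_spec c (S m)); simpl; lia.
Qed.

Definition Phi (n i : nat) : nat :=
  nsum (n - 1) (fun q => if wall n (S q) i then S q else O).

(* Phi is bounded, so 2 n^2 - (Phi i + Phi j) is a decreasing measure. *)
Lemma Phi_le n i : (Phi n i <= n * n)%nat.
Proof.
  unfold Phi. eapply Nat.le_trans; [apply (nsum_le _ _ (fun _ => n))|].
  - intros q Hq. destruct (wall n (S q) i); lia.
  - rewrite nsum_const. nia.
Qed.

Lemma Phi_flip n k i : (1 <= k)%nat -> (k < n)%nat -> wall n k i = false ->
  (Phi n i < Phi n (flip n k i))%nat.
Proof.
  intros Hk Hkn Hw. unfold Phi.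
  assert (Hterm : forall q, (q < n - 1)%nat ->
    ((if wall n (S q) i then S q else O) + (if (S q =? k)%nat then k else O) <=
     (if wall n (S q) (flip n k i) then S q else O)
     + (if (S q =? k - 1)%nat then k - 1 else O))%nat).
  { intros q Hq. destruct (Nat.eqb_spec (S q) k) as [E|Hqk].
    - subst k. rewrite wall_flip, Hw by lia. simpl. lia.
    - destruct (Nat.eqb_spec (S q) (k - 1)) as [E|E].
      + destruct (wall n (S q) i), (wall n (S q) (flip n k i)); lia.
      + rewrite wall_flip_other by lia. lia. }
  pose proof (nsum_le _ _ _ Hterm) as Hsum. rewrite !nsum_plus, !nsum_point in Hsum.
  destruct (Nat.leb_spec 1 k), (Nat.leb_spec k (n - 1)); try lia.
  destruct ((1 <=? k - 1) && (k - 1 <=? n - 1))%nat; simpl in Hsum; lia.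
Qed.

Lemma pow_fact_le_exp x m : 0 <= x -> x ^ m / INR (fact m) <= exp x.
Proof.
  intros Hx. eapply Rle_trans; [|apply (ElemFct.exp_ge_taylor x m Hx)].
  destruct m as [|m]; [simpl; lra|].
  rewrite tech5.
  assert (0 <= sum_f_R0 (fun k => x ^ k / INR (fact k)) m).
  { apply cond_pos_sum. intros k. apply Rmult_le_pos; [apply pow_le; auto|].
    apply Rlt_le, Rinv_0_lt_compat, INR_fact_lt_0. }
  lra.
Qed.

Lemma exp_type_radius (a : nat -> R) B c : 0 <= B -> 0 <= c ->
  (forall m, Rabs (a m) <= B * c ^ m) ->
  forall x, Rbar_lt (Rabs x) (CV_radius (fun m => a m / INR (fact m))).
Proof.
  intros HB Hc Ha x. set (y := Rabs x + 1).
  assert (Hy : 0 <= y) by (unfold y; pose proof (Rabs_pos x); lra).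
  assert (HE : exists M, forall m, Rabs (a m / INR (fact m) * y ^ m) <= M).
  { exists (B * exp (c * y)). intros m.
    pose proof (INR_fact_lt_0 m) as Hf.
    rewrite Rabs_mult, Rabs_div, (Rabs_right (INR (fact m))), (Rabs_right (y ^ m))
      by (try apply Rle_ge, pow_le; auto; lra).
    apply Rle_trans with (B * ((c * y) ^ m / INR (fact m))).
    - rewrite Rpow_mult_distr. unfold Rdiv.
      replace (B * (c ^ m * y ^ m * / INR (fact m)))
        with (B * c ^ m * / INR (fact m) * y ^ m) by ring.
      apply Rmult_le_compat_r; [apply pow_le; auto|].
      apply Rmult_le_compat_r; [left; apply Rinv_0_lt_compat; auto | apply Ha].
    - apply Rmult_le_compat_l; auto. apply pow_fact_le_exp. nra. }
  eapply Rbar_lt_le_trans; [| apply (proj1 (CV_radius_bounded _) y HE)].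
  simpl. unfold y. lra.
Qed.

Lemma is_pseries_point (c x : R) : is_pseries (fun m => if (m =? 0)%nat then c else 0) x c.
Proof.
  apply is_pseries_Reals. intros eps Heps. exists O. intros M _.
  replace (sum_f_R0 _ M) with c; [unfold R_dist; rewrite Rminus_diag, Rabs_R0; lra|].
  induction M as [|M IH]; [simpl; ring | rewrite tech5, <- IH; simpl; ring].
Qed.

Lemma is_pseries_zero (x : R) : is_pseries (fun _ => 0) x 0.
Proof.
  apply (is_pseries_ext (fun m => if (m =? 0)%nat then 0 else 0)), is_pseries_point.
  intros m; destruct (m =? 0)%nat; reflexivity.
Qed.

Lemma is_pseries_rsum K (g : nat -> nat -> R) (l : nat -> R) (x : R) :
  (forall q, (q < K)%nat -> is_pseries (g q) x (l q)) ->
  is_pseries (fun m => rsum K (fun q => g q m)) x (rsum K l).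
Proof.
  induction K as [|K IH]; intros H; simpl.
  - apply is_pseries_zero.
  - apply (is_pseries_plus (fun m => rsum K (fun q => g q m)) (g K));
      [apply IH; intros; apply H | apply H]; lia.
Qed.

Lemma is_pseries_gen n (c : nat -> nat -> nat -> R) (v : nat -> nat -> R) (x : R) i j :
  (i < 2 ^ n)%nat -> (j < 2 ^ n)%nat ->
  (forall a b, (a < 2 ^ n)%nat -> (b < 2 ^ n)%nat -> is_pseries (c a b) x (v a b)) ->
  is_pseries (fun m => gen n (fun a b => c a b m) i j) x (gen n v i j).
Proof.
  intros Hi Hj Hc. unfold gen. apply is_pseries_rsum. intros q Hq.
  set (rt := / 2 * (bR (wall n (S q) i) + bR (wall n (S q) j))).
  apply (is_pseries_minus
    (fun m => if negb (wall n (S q) i) && negb (wall n (S q) j)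
              then c (flip n (S q) i) (flip n (S q) j) m else 0)
    (fun m => rt * c i j m)).
  - destruct (_ && _).
    + apply Hc; apply flip_lt; auto; lia.
    + apply is_pseries_zero.
  - apply (is_pseries_scal _ (c i j)); [apply Rmult_comm | auto].
Qed.

Definition coef (n : nat) (r0 : nat -> nat -> R) (i j m : nat) : R :=
  genpow n m r0 i j / INR (fact m).
Definition flow (n : nat) (r0 : nat -> nat -> R) (i j : nat) (t : R) : R :=
  PSeries (coef n r0 i j) t.

Lemma gen_scale n c r i j : gen n (fun a b => c * r a b) i j = c * gen n r i j.
Proof. unfold gen. rewrite <- rsum_scal. apply rsum_ext. intros q _. destruct (_ && _); ring. Qed.

Section Flow.
Variable n : nat.
Variable r0 : nat -> nat -> R.

Lemma genpow_bound : exists B, 0 <= B /\ forall m i j, (i < 2 ^ n)%nat -> (j < 2 ^ n)%nat ->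
  Rabs (genpow n m r0 i j) <= B * (2 * INR n) ^ m.
Proof.
  set (B := rsum (2 ^ n) (fun i => rsum (2 ^ n) (fun j => Rabs (r0 i j)))).
  assert (Hrow : forall i, 0 <= rsum (2 ^ n) (fun j => Rabs (r0 i j)))
    by (intros; apply rsum_nonneg; intros; apply Rabs_pos).
  assert (HB : forall i j, (i < 2 ^ n)%nat -> (j < 2 ^ n)%nat -> Rabs (r0 i j) <= B).
  { intros i j Hi Hj. unfold B.
    eapply Rle_trans; [| apply (rsum_term_le _ _ i); auto].
    apply (rsum_term_le _ (fun j => Rabs (r0 i j)) j); auto. intros; apply Rabs_pos. }
  assert (HB0 : 0 <= B) by (apply rsum_nonneg; auto).
  exists B. split; auto.
  induction m as [|m IH]; intros i j Hi Hj; simpl.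
  - rewrite Rmult_1_r. auto.
  - replace (B * (2 * INR n * (2 * INR n) ^ m)) with (2 * INR n * (B * (2 * INR n) ^ m)) by ring.
    apply gen_bound; auto.
    apply Rmult_le_pos; auto. apply pow_le. pose proof (pos_INR n); lra.
Qed.

Lemma coef_radius i j x : (i < 2 ^ n)%nat -> (j < 2 ^ n)%nat ->
  Rbar_lt (Rabs x) (CV_radius (coef n r0 i j)).
Proof.
  intros Hi Hj. destruct genpow_bound as [B [HB0 HB]].
  apply (exp_type_radius (fun m => genpow n m r0 i j) B (2 * INR n)); auto.
  pose proof (pos_INR n); lra.
Qed.

Lemma flow_is_pseries i j t : (i < 2 ^ n)%nat -> (j < 2 ^ n)%nat ->
  is_pseries (coef n r0 i j) t (flow n r0 i j t).
Proof. intros. apply PSeries_correct, CV_radius_inside, coef_radius; auto. Qed.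

Lemma flow_derive i j t : (i < 2 ^ n)%nat -> (j < 2 ^ n)%nat ->
  is_derive (flow n r0 i j) t (gen n (fun a b => flow n r0 a b t) i j).
Proof.
  intros Hi Hj. unfold flow at 1.
  replace (gen n (fun a b => flow n r0 a b t) i j)
    with (PSeries (PS_derive (coef n r0 i j)) t).
  - apply is_derive_PSeries, coef_radius; auto.
  - apply is_pseries_unique.
    apply (is_pseries_ext (fun m => gen n (fun a b => coef n r0 a b m) i j)).
    + intros m. change (?x = ?y) with (@eq R x y). unfold PS_derive, coef. simpl genpow.
      rewrite (gen_ext n (fun a b => genpow n m r0 a b / INR (fact m))
                 (fun a b => / INR (fact m) * genpow n m r0 a b)), gen_scale
        by (auto; intros; unfold Rdiv; ring).
      rewrite fact_simpl, mult_INR.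
      pose proof (INR_fact_lt_0 m). assert (0 < INR (S m)) by (apply lt_0_INR; lia).
      field. lra.
    + apply is_pseries_gen; auto. intros. apply flow_is_pseries; auto.
Qed.

Lemma flow_trace t : rsum (2 ^ n) (fun i => flow n r0 i i t) = rsum (2 ^ n) (fun i => r0 i i).
Proof.
  transitivity (PSeries (fun m => rsum (2 ^ n) (fun i => coef n r0 i i m)) t).
  - symmetry. apply is_pseries_unique, is_pseries_rsum. intros. apply flow_is_pseries; auto.
  - apply is_pseries_unique.
    apply (is_pseries_ext (fun m => if (m =? 0)%nat then rsum (2 ^ n) (fun i => r0 i i) else 0)).
    + intros [|m]; change (?x = ?y) with (@eq R x y); unfold coef; simpl genpow.
      * simpl. apply rsum_ext. intros. field.
      * simpl (S m =? 0)%nat. cbv iota. unfold Rdiv.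
        rewrite (rsum_ext _ _ (fun i => / INR (fact (S m)) * gen n (genpow n m r0) i i))
          by (intros; ring).
        rewrite rsum_scal, gen_trace. ring.
    + apply is_pseries_point.
Qed.

Lemma flow_cmpl_l i j t : (i < 2 ^ n)%nat -> (j < 2 ^ n)%nat ->
  (forall a b, (a < 2 ^ n)%nat -> (b < 2 ^ n)%nat -> r0 (cmpl n a) b = r0 a b) ->
  flow n r0 (cmpl n i) j t = flow n r0 i j t.
Proof.
  intros Hi Hj H. unfold flow. apply PSeries_ext. intros m. unfold coef. f_equal.
  revert i j Hi Hj. induction m as [|m IH]; intros i j Hi Hj; simpl; auto.
  apply gen_cmpl_l; auto.
Qed.

Lemma flow_cmpl_r i j t : (i < 2 ^ n)%nat -> (j < 2 ^ n)%nat ->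
  (forall a b, (a < 2 ^ n)%nat -> (b < 2 ^ n)%nat -> r0 a (cmpl n b) = r0 a b) ->
  flow n r0 i (cmpl n j) t = flow n r0 i j t.
Proof.
  intros Hi Hj H. unfold flow. apply PSeries_ext. intros m. unfold coef. f_equal.
  revert i j Hi Hj. induction m as [|m IH]; intros i j Hi Hj; simpl; auto.
  apply gen_cmpl_r; auto.
Qed.

End Flow.

Lemma derive_comparison (u v du dv : R -> R) t : 0 <= t ->
  (forall s, is_derive u s (du s)) -> (forall s, is_derive v s (dv s)) ->
  (forall s, 0 <= s <= t -> Rabs (du s) <= dv s) ->
  Rabs (u t - u 0) <= v t - v 0.
Proof.
  intros Ht Hu Hv Hcmp.
  assert (Hcont : forall f df, (forall s, is_derive f s (df s)) -> forall s, continuity_pt f s)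
    by (intros f df Hf s; apply derivable_continuous_pt; exists (df s); apply is_derive_Reals, Hf).
  destruct (MVT_gen (fun s => u s - v s) 0 t (fun s => du s - dv s)) as [c [Hc Hdiff]];
    [intros; apply @is_derive_minus; auto
    | intros; apply continuity_pt_minus; eapply Hcont; eauto |].
  destruct (MVT_gen (fun s => u s + v s) 0 t (fun s => du s + dv s)) as [c' [Hc' Hsum]];
    [intros; apply @is_derive_plus; auto
    | intros; apply continuity_pt_plus; eapply Hcont; eauto |].
  rewrite Rmin_left, Rmax_right in Hc, Hc' by lra.
  pose proof (Hcmp c Hc) as Hdc. pose proof (Hcmp c' Hc') as Hdc'.
  apply Rabs_le_between in Hdc. apply Rabs_le_between in Hdc'.
  apply Rabs_le. split; nra.
Qed.

(* Variation of constants: if F' = G - lam F with lam >= 1/2 and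
   |G(t)| <= C e^{-t/4}, then u = e^{lam t} F has |u'| <= v' for
   v = 4 C e^{(lam - 1/4) t}. *)
Lemma damped_growth_bound (F G : R -> R) lam C :
  (forall t, is_derive F t (G t - lam * F t)) -> / 2 <= lam -> 0 <= C ->
  (forall t, 0 <= t -> Rabs (G t) <= C * exp (- t / 4)) ->
  forall t, 0 <= t -> exp (lam * t) * Rabs (F t) <= Rabs (F 0) + 4 * C * exp ((lam - / 4) * t).
Proof.
  intros HF Hlam HC HG t Ht.
  set (mu := lam - / 4).
  assert (Hcmp : Rabs (exp (lam * t) * F t - exp (lam * 0) * F 0)
                 <= 4 * C * exp (mu * t) - 4 * C * exp (mu * 0)).
  { apply (derive_comparison (fun s => exp (lam * s) * F s) (fun s => 4 * C * exp (mu * s))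
             (fun s => exp (lam * s) * G s) (fun s => 4 * C * (mu * exp (mu * s)))); auto.
    - intros s. eapply is_derive_ext; [intros; reflexivity|].
      replace (exp (lam * s) * G s)
        with (lam * exp (lam * s) * F s + exp (lam * s) * (G s - lam * F s)) by ring.
      apply (is_derive_mult (fun s => exp (lam * s)) F); [auto_derive; auto; ring | auto].
    - intros s. auto_derive; auto. ring.
    - intros s Hs. rewrite Rabs_mult, Rabs_right by (apply Rle_ge, Rlt_le, exp_pos).
      apply Rle_trans with (exp (lam * s) * (C * exp (- s / 4))).
      + apply Rmult_le_compat_l; [apply Rlt_le, exp_pos | apply HG; lra].
      + assert (E : exp (mu * s) = exp (lam * s) * exp (- s / 4))
          by (rewrite <- exp_plus; f_equal; unfold mu; field).
        pose proof (exp_pos (mu * s)).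
        replace (exp (lam * s) * (C * exp (- s / 4))) with (C * exp (mu * s)) by (rewrite E; ring).
        assert (/ 4 <= mu) by (unfold mu; lra).
        assert (0 <= C * exp (mu * s)) by (apply Rmult_le_pos; lra). nra. }
  rewrite !Rmult_0_r, exp_0, Rmult_1_l, Rmult_1_r in Hcmp.
  rewrite <- (Rabs_right (exp (lam * t))) by (apply Rle_ge, Rlt_le, exp_pos).
  rewrite <- Rabs_mult.
  pose proof (Rabs_triang_inv (exp (lam * t) * F t) (F 0)). lra.
Qed.

Lemma damped_decay (F G : R -> R) lam C :
  (forall t, is_derive F t (G t - lam * F t)) -> / 2 <= lam -> 0 <= C ->
  (forall t, 0 <= t -> Rabs (G t) <= C * exp (- t / 4)) ->
  forall t, 0 <= t -> Rabs (F t) <= (Rabs (F 0) + 4 * C) * exp (- t / 4).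
Proof.
  intros HF Hlam HC HG t Ht.
  pose proof (damped_growth_bound F G lam C HF Hlam HC HG t Ht) as Hu.
  assert (Hsplit : exp (- t / 4) = exp (- (lam * t)) * exp ((lam - / 4) * t))
    by (rewrite <- exp_plus; f_equal; field).
  assert (Hle : exp (- (lam * t)) <= exp (- t / 4)).
  { destruct (Rle_lt_or_eq_dec (- (lam * t)) (- t / 4)) as [Hlt|Heq]; [nra| |].
    - left. apply exp_increasing, Hlt.
    - right. rewrite Heq. reflexivity. }
  apply Rmult_le_compat_l with (r := exp (- (lam * t))) in Hu; [|apply Rlt_le, exp_pos].
  rewrite <- Rmult_assoc, <- exp_plus, Rplus_opp_l, exp_0, Rmult_1_l in Hu.
  pose proof (Rabs_pos (F 0)). pose proof (exp_pos (- (lam * t))). nra.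
Qed.

Definition decays (f : R -> R) : Prop :=
  exists C, 0 <= C /\ forall t, 0 <= t -> Rabs (f t) <= C * exp (- t / 4).

Lemma decays_zero : decays (fun _ => 0).
Proof. exists 0. split; [lra|]. intros t _. rewrite Rabs_R0. lra. Qed.

Lemma decays_rsum K (g : nat -> R -> R) : (forall q, (q < K)%nat -> decays (g q)) ->
  decays (fun t => rsum K (fun q => g q t)).
Proof.
  induction K as [|K IH]; intros H; simpl; [apply decays_zero|].
  destruct (IH ltac:(intros; apply H; lia)) as [C1 [HC1 H1]].
  destruct (H K ltac:(lia)) as [C2 [HC2 H2]].
  exists (C1 + C2). split; [lra|]. intros t Ht.
  eapply Rle_trans; [apply Rabs_triang|].
  pose proof (H1 t Ht). pose proof (H2 t Ht). lra.
Qed.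

Definition ultimately (P : R -> Prop) : Prop := exists T, forall t, T <= t -> P t.

Lemma ultimately_and (P Q : R -> Prop) :
  ultimately P -> ultimately Q -> ultimately (fun t => P t /\ Q t).
Proof.
  intros [T1 H1] [T2 H2]. exists (Rmax T1 T2). intros t Ht.
  split; [apply H1 | apply H2]; eapply Rle_trans; [apply Rmax_l | | apply Rmax_r |]; exact Ht.
Qed.

Lemma ultimately_forall_lt N (P : nat -> R -> Prop) :
  (forall i, (i < N)%nat -> ultimately (P i)) ->
  ultimately (fun t => forall i, (i < N)%nat -> P i t).
Proof.
  induction N as [|N IH]; intros H.
  - exists 0. intros; lia.
  - destruct (ultimately_and _ _ (IH ltac:(intros; apply H; lia)) (H N ltac:(lia)))
      as [T HT].
    exists T. intros t Ht i Hi. destruct (HT t Ht) as [Hlt HN].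
    destruct (Nat.eq_dec i N) as [->|Hne]; [exact HN | apply Hlt; lia].
Qed.

(* Decay implies convergence to 0, since e^{t/4} >= 1 + t/4. *)
Lemma decays_small f : decays f -> forall eps, 0 < eps -> ultimately (fun t => Rabs (f t) < eps).
Proof.
  intros [C [HC Hf]] eps Heps. exists (4 * C / eps). intros t Ht.
  assert (Ht0 : 0 <= t) by (eapply Rle_trans; [|exact Ht]; apply Rmult_le_pos;
                             [lra | apply Rlt_le, Rinv_0_lt_compat; lra]).
  assert (HT : 4 * C <= eps * t)
    by (apply Rmult_le_compat_l with (r := eps) in Ht; [|lra]; field_simplify in Ht; lra).
  assert (Hexp : 1 + t / 4 <= exp (t / 4)) by apply exp_ineq1_le.
  assert (E : exp (- t / 4) * exp (t / 4) = 1)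
    by (rewrite <- exp_plus, <- exp_0; f_equal; field).
  pose proof (Hf t Ht0). pose proof (exp_pos (- t / 4)). nra.
Qed.

Definition walled (n i j : nat) : Prop :=
  exists k, (1 <= k)%nat /\ (k < n)%nat /\ (wall n k i = true \/ wall n k j = true).

(* Induction on the potential: the inflow into a walled entry comes from
   walled entries of larger potential, which decay by induction, and the
   entry itself is damped at rate >= 1/2. *)
Lemma flow_walled_decays n r0 i j : (i < 2 ^ n)%nat -> (j < 2 ^ n)%nat ->
  walled n i j -> decays (flow n r0 i j).
Proof.
  remember (2 * (n * n) - (Phi n i + Phi n j))%nat as d eqn:Hd.
  revert i j Hd. induction d as [d IH] using lt_wf_ind. intros i j Hd Hi Hj Hw.
  assert (Hgain : decays (fun t => gain n (fun a b => flow n r0 a b t) i j)).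
  { apply decays_rsum. intros q Hq.
    destruct (wall n (S q) i) eqn:Ei, (wall n (S q) j) eqn:Ej; try apply decays_zero.
    pose proof (Phi_flip n (S q) i ltac:(lia) ltac:(lia) Ei).
    pose proof (Phi_flip n (S q) j ltac:(lia) ltac:(lia) Ej).
    pose proof (Phi_le n (flip n (S q) i)). pose proof (Phi_le n (flip n (S q) j)).
    apply (IH (2 * (n * n) - (Phi n (flip n (S q) i) + Phi n (flip n (S q) j)))%nat);
      try (apply flip_lt; auto); try lia.
    exists (S q). rewrite wall_flip, Ei by lia. repeat split; auto; lia. }
  destruct Hgain as [C [HC HG]]. destruct Hw as [k [Hk [Hkn Hw]]].
  exists (Rabs (flow n r0 i j 0) + 4 * C). split; [pose proof (Rabs_pos (flow n r0 i j 0)); lra|].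
  apply (damped_decay _ (fun t => gain n (fun a b => flow n r0 a b t) i j) (rate n i j)); auto.
  - intros t. rewrite <- gen_gain_rate. apply flow_derive; auto.
  - apply (rate_ge_half n i j k); auto.
Qed.

Definition ghz_index (n i : nat) : bool := ((i =? 0) || (i =? 2 ^ n - 1))%nat.

Lemma walled_of_not_ghz n i j : (i < 2 ^ n)%nat -> (j < 2 ^ n)%nat ->
  ghz_index n i && ghz_index n j = false -> walled n i j.
Proof.
  intros Hi Hj H. unfold ghz_index in H.
  apply andb_false_iff in H as [H|H]; apply orb_false_iff in H as [H0 H1];
    apply Nat.eqb_neq in H0, H1.
  - destruct (exists_wall n i Hi H0 H1) as [k [Hk [Hkn Hw]]]. exists k. auto.
  - destruct (exists_wall n j Hj H0 H1) as [k [Hk [Hkn Hw]]]. exists k. auto.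
Qed.

(* For n >= 1 the two GHZ indices are distinct. *)
Lemma rsum_ghz_indicator n c : (1 <= n)%nat ->
  rsum (2 ^ n) (fun a => if ghz_index n a then c else 0) = 2 * c.
Proof.
  intros Hn. assert (H2 : (2 <= 2 ^ n)%nat)
    by (pose proof (Nat.pow_le_mono_r 2 1 n ltac:(lia) Hn); simpl in *; lia).
  rewrite (rsum_ext _ _ (fun a => (if (a =? 0)%nat then c else 0)
                                  + (if (a =? 2 ^ n - 1)%nat then c else 0))).
  - rewrite rsum_plus, (rsum_single _ _ 0), (rsum_single _ (fun a => if (a =? _)%nat then c else 0)
      (2 ^ n - 1)), !Nat.eqb_refl; try ring; try lia;
      intros a _ Ha; apply Nat.eqb_neq in Ha; rewrite Ha; reflexivity.
  - intros a _. unfold ghz_index.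
    destruct (Nat.eqb_spec a 0), (Nat.eqb_spec a (2 ^ n - 1)); simpl; lra || lia.
Qed.

Section GHZBlock.
Variable n : nat.
Hypothesis Hn : (1 <= n)%nat.
Variable r0 : nat -> nat -> R.
Hypothesis Hcmpl_l : forall a b, (a < 2 ^ n)%nat -> (b < 2 ^ n)%nat -> r0 (cmpl n a) b = r0 a b.
Hypothesis Hcmpl_r : forall a b, (a < 2 ^ n)%nat -> (b < 2 ^ n)%nat -> r0 a (cmpl n b) = r0 a b.

(* By the spin-flip symmetry the four GHZ entries of the flow coincide. *)
Lemma flow_ghz_block i j t : ghz_index n i = true -> ghz_index n j = true ->
  flow n r0 i j t = flow n r0 0 0 t.
Proof.
  assert (H0 : (0 < 2 ^ n)%nat) by apply pow2_pos.
  assert (Hlast : (2 ^ n - 1)%nat = cmpl n 0) by (unfold cmpl; lia).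
  unfold ghz_index. intros Hi Hj.
  transitivity (flow n r0 0 j t).
  - apply orb_true_iff in Hi as [Hi|Hi]; apply Nat.eqb_eq in Hi; subst i; [reflexivity|].
    rewrite Hlast. apply flow_cmpl_l; auto.
    apply orb_true_iff in Hj as [Hj|Hj]; apply Nat.eqb_eq in Hj; lia.
  - apply orb_true_iff in Hj as [Hj|Hj]; apply Nat.eqb_eq in Hj; subst j; [reflexivity|].
    rewrite Hlast. apply flow_cmpl_r; auto.
Qed.

(* Trace preservation pins the GHZ block: tr = 2 F_00 + (decaying rest). *)
Lemma flow_trace_split t :
  rsum (2 ^ n) (fun i => r0 i i) =
  2 * flow n r0 0 0 t + rsum (2 ^ n) (fun a => if ghz_index n a then 0 else flow n r0 a a t).
Proof.
  rewrite <- (flow_trace n r0 t), <- (rsum_ghz_indicator n _ Hn), <- rsum_plus.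
  apply rsum_ext. intros a Ha. destruct (ghz_index n a) eqn:Ea; [|ring].
  rewrite flow_ghz_block by auto. ring.
Qed.

Lemma flow_limit i j : (i < 2 ^ n)%nat -> (j < 2 ^ n)%nat -> forall eps, 0 < eps ->
  ultimately (fun t => Rabs (flow n r0 i j t -
    (if ghz_index n i && ghz_index n j then rsum (2 ^ n) (fun a => r0 a a) / 2 else 0)) < eps).
Proof.
  intros Hi Hj eps Heps. destruct (ghz_index n i && ghz_index n j) eqn:E.
  - apply andb_true_iff in E as [Ei Ej].
    assert (Hrest : decays (fun t => rsum (2 ^ n)
                      (fun a => if ghz_index n a then 0 else flow n r0 a a t))).
    { apply decays_rsum. intros a Ha. destruct (ghz_index n a) eqn:Ea; [apply decays_zero|].
      apply flow_walled_decays, walled_of_not_ghz; auto. rewrite Ea. reflexivity. }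
    destruct (decays_small _ Hrest (2 * eps) ltac:(lra)) as [T HT].
    exists T. intros t Ht. specialize (HT t Ht).
    rewrite flow_ghz_block, (flow_trace_split t) by auto.
    replace (flow n r0 0 0 t - _) with (- (rsum (2 ^ n)
      (fun a => if ghz_index n a then 0 else flow n r0 a a t)) / 2) by field.
    unfold Rdiv. rewrite Rabs_mult, Rabs_Ropp, (Rabs_right (/ 2)) by lra. lra.
  - destruct (decays_small _ (flow_walled_decays n r0 i j Hi Hj
                                (walled_of_not_ghz n i j Hi Hj E)) eps Heps) as [T HT].
    exists T. intros t Ht. rewrite Rminus_0_r. auto.
Qed.

End GHZBlock.

Lemma Rlim_unique u l : Un_cv u l -> Rlim u = l.
Proof.
  intros H. unfold Rlim. apply (UL_sequence u); auto.
  apply (epsilon_spec (inhabits 0) (fun l => Un_cv u l)). exists l; auto.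
Qed.

Lemma evol_part proj n t rho i j : proj = Re \/ proj = Im ->
  (i < 2 ^ n)%nat -> (j < 2 ^ n)%nat ->
  proj (evol n t rho i j) = flow n (fun a b => proj (rho a b)) i j t.
Proof.
  intros Hp Hi Hj.
  assert (Hproj : Rlinear proj) by (destruct Hp; subst; auto using Rlinear_Re, Rlinear_Im).
  set (r0 := fun a b => proj (rho a b)).
  transitivity (Rlim (fun M =>
    sum_f_R0 (fun m => t ^ m / INR (fact m) * proj (Lpow n m rho i j)) M));
    [destruct Hp; subst; reflexivity|].
  apply Rlim_unique. intros eps Heps.
  destruct (proj1 (is_pseries_Reals _ _ _) (flow_is_pseries n r0 i j t Hi Hj) eps Heps)
    as [N HN].
  exists N. intros M HM. rewrite (sum_eq _ (fun m => coef n r0 i j m * t ^ m)).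
  - apply HN; auto.
  - intros m _. unfold coef, r0. rewrite proj_Lpow by auto. field. apply INR_fact_neq_0.
Qed.

Lemma GHZ_part proj n i j : Rlinear proj ->
  proj (GHZ n i j) = if ghz_index n i && ghz_index n j then proj C1 / 2 else 0.
Proof.
  intros Hproj. unfold GHZ, outer, psiGHZ. fold (ghz_index n i) (ghz_index n j).
  destruct (ghz_index n i), (ghz_index n j); cbn [andb];
    try (replace (Cmul _ _) with C0 by (apply Ceq; simpl; ring); apply proj_C0; auto).
  assert (Hs : sqrt 2 * sqrt 2 = 2) by (apply sqrt_sqrt; lra).
  assert (sqrt 2 <> 0) by (intro H; rewrite H in Hs; lra).
  replace (Cmul (RtoC (/ sqrt 2)) (Cconj (RtoC (/ sqrt 2)))) with (Cmul (RtoC (/ 2)) C1).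
  - rewrite proj_scale by auto. field.
  - apply Ceq; simpl; [rewrite <- Rinv_mult, Hs | ]; ring.
Qed.

(* A density matrix supported in H' is invariant under sigma_x^{(x) n} on
   both sides: X rho = rho by assumption, and rho X = rho by hermiticity. *)
Lemma supported_cmpl_invariant n rho : is_density (2 ^ n) rho -> supported_in_Hprime n rho ->
  (forall a b, (a < 2 ^ n)%nat -> (b < 2 ^ n)%nat -> rho (cmpl n a) b = rho a b) /\
  (forall a b, (a < 2 ^ n)%nat -> (b < 2 ^ n)%nat -> rho a (cmpl n b) = rho a b).
Proof.
  intros [Hherm _] Hsupp.
  assert (HL : forall a b, (a < 2 ^ n)%nat -> (b < 2 ^ n)%nat -> rho (cmpl n a) b = rho a b)
    by (intros; rewrite <- Xn_mul by auto; apply Hsupp; auto).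
  split; auto. intros a b Ha Hb.
  rewrite Hherm, HL, <- Hherm by auto using cmpl_lt. reflexivity.
Qed.

Lemma evol_part_limit proj n rho : proj = Re \/ proj = Im -> (1 <= n)%nat ->
  is_density (2 ^ n) rho -> supported_in_Hprime n rho ->
  forall i j, (i < 2 ^ n)%nat -> (j < 2 ^ n)%nat -> forall eps, 0 < eps ->
  ultimately (fun t => Rabs (proj (evol n t rho i j) - proj (GHZ n i j)) < eps).
Proof.
  intros Hp Hn Hrho Hsupp i j Hi Hj eps Heps.
  assert (Hproj : Rlinear proj) by (destruct Hp; subst; auto using Rlinear_Re, Rlinear_Im).
  destruct (supported_cmpl_invariant n rho Hrho Hsupp) as [HL HR].
  assert (Htr : rsum (2 ^ n) (fun a => proj (rho a a)) = proj C1)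
    by (destruct Hrho as [_ [_ Htr]]; rewrite <- Htr, proj_Csum; auto).
  destruct (flow_limit n Hn (fun a b => proj (rho a b))) with (i := i) (j := j) (eps := eps)
    as [T HT]; auto; try (intros; cbv beta; rewrite ?HL, ?HR; auto).
  exists T. intros t Ht. rewrite evol_part, GHZ_part by auto. rewrite <- Htr. auto.
Qed.

Lemma Cmod_lt z eps : Rabs (Re z) < eps / 2 -> Rabs (Im z) < eps / 2 -> Cmod z < eps.
Proof.
  intros Hx Hy. unfold Cmod.
  assert (0 < eps) by (pose proof (Rabs_pos (Re z)); lra).
  rewrite <- (sqrt_pow2 eps) by lra. apply sqrt_lt_1_alt. split.
  - apply Rplus_le_le_0_compat; apply pow2_ge_0.
  - rewrite <- (pow2_abs (Re z)), <- (pow2_abs (Im z)).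
    pose proof (Rabs_pos (Re z)). pose proof (Rabs_pos (Im z)). nra.
Qed.

Theorem mainTheorem14 (n : nat) (Hn : (3 <= n)%nat) (rho0 : Mat)
  (Hrho : is_density (2 ^ n) rho0) (Hsupp : supported_in_Hprime n rho0) :
  forall eps : R, 0 < eps ->
    exists T : R, forall t : R, T <= t ->
      forall i j, (i < 2 ^ n)%nat -> (j < 2 ^ n)%nat ->
        Cmod (Cadd (evol n t rho0 i j) (Copp (GHZ n i j))) < eps.
Proof.
  intros eps Heps.
  assert (Hpart : forall proj, proj = Re \/ proj = Im ->
            forall i j, (i < 2 ^ n)%nat -> (j < 2 ^ n)%nat ->
            ultimately (fun t => Rabs (proj (evol n t rho0 i j) - proj (GHZ n i j)) < eps / 2))
    by (intros; apply evol_part_limit; auto; lra || lia).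
  enough (H : ultimately (fun t => forall i, (i < 2 ^ n)%nat -> forall j, (j < 2 ^ n)%nat ->
                 Cmod (Cadd (evol n t rho0 i j) (Copp (GHZ n i j))) < eps)).
  { destruct H as [T HT]. exists T. intros t Ht i j Hi Hj. apply HT; auto. }
  apply ultimately_forall_lt. intros i Hi.
  apply ultimately_forall_lt. intros j Hj.
  destruct (ultimately_and _ _ (Hpart Re (or_introl eq_refl) i j Hi Hj)
                                (Hpart Im (or_intror eq_refl) i j Hi Hj)) as [T HT].
  exists T. intros t Ht. destruct (HT t Ht). apply Cmod_lt; auto.
Qed.
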